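(* Let $D$ be any tangle diagram and let $i\mapsto(g_i,L_i)$ be any decorated $\mathrm{SL}_2(\mathbb{C})$-coloring of $D$, corresponding to a decorated representation $\rho$. Then there exist $h\in\mathrm{SL}_2(\mathbb{C})$ and a shadow coloring $j\mapsto u_j$ of the conjugated decorated coloring $i\mapsto(h^{-1}g_ih,\,L_ih)$ such that the resulting decorated shadow coloring is admissible.
   Context: Tangle diagrams: a tangle diagram $D$ is an oriented tangle diagram in the square $[0,1]^2$, drawn with strands running from left to right, and viewed as a 4-valent graph with over/under information at each crossing. Segments are the edges of this graph; a strand is cut at every crossing, whether it passes over or under there. Regions are the connected components of the complement of the graph in the square. Above and below: for a segment $i$, $i^{\uparrow}$ is the region on the left of $i$ with respect to its orientation and $i^{\downarrow}$ the region on its right. Crossing labels: rotate a crossing so that both strands point to the right. The incoming segments are $1$ (upper left) and $2$ (lower left). The outgoing segments are $1'$ (lower right, continuing $1$) and $2'$ (upper right, continuing $2$). The crossing is positive if strand $1\to1'$ is over and negative if strand $2\to2'$ is over. Decorated $\mathrm{SL}_2(\mathbb{C})$-coloring: assign to each segment $i$ a matrix $g_i\in\mathrm{SL}_2(\mathbb{C})$ and a line $L_i\subset\mathbb{C}^2$ of row vectors with $L_ig_i=L_i$, such that: - at positive crossings, $g_{1'}=g_1$, $g_{2'}=g_1^{-1}g_2g_1$, $L_{1'}=L_1$ and $L_{2'}=L_2g_1$; - at negative crossings, $g_{2'}=g_2$, $g_{1'}=g_2g_1g_2^{-1}$, $L_{2'}=L_2$ and $L_{1'}=L_1g_2^{-1}$.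 Such colorings are equivalent to decorated representations of the Wirtinger presentation of the tangle group, i.e. representations $\rho$ into $\mathrm{SL}_2(\mathbb{C})$ together with a choice of invariant line for the meridians. Shadow coloring: assign a nonzero column vector $u_j\in\mathbb{C}^2$ to each region with $u_{i^{\downarrow}}=g_iu_{i^{\uparrow}}$ for every segment $i$. Admissibility: with $e_2=(0,1)^T$ and nonzero $v_i\in L_i$, the decorated shadow coloring is admissible if $\det(u_j,e_2)\ne0$ for every region $j$ and $v_ie_2\neq0$, $v_iu_{i^{\uparrow}}\neq0$ for every segment $i$. Here $\det(x,y)$ is the determinant of the matrix with columns $x,y$. *)

From HB Require Import structures.
From mathcomp Require Import all_boot all_order all_algebra.
From mathcomp Require Export complex reals.

Set Implicit Arguments.
Unset Strict Implicit.
Unset Printing Implicit Defensive.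

Import Order.TTheory GRing.Theory Num.Theory.
Local Open Scope ring_scope.
Local Open Scope nat_scope.


(* Combinatorial model of an oriented tangle diagram in [0,1]^2 with strand   *)
(* endpoints on the left and right sides, in general position w.r.t. the      *)
(* horizontal coordinate x.  The diagram is cut by vertical lines x = const   *)
(* ("levels" 0 .. n) into elementary vertical slices.  On each level the      *)
(* diagram meets finitely many points, indexed 0,1,.. from TOP to BOTTOM, and *)
(* each point carries an orientation: true = strand points to the right,      *)
(* false = strand points to the left.  If a level has m points, the           *)
(* complement of these points in the vertical line has m+1 intervals, indexed *)
(* 0..m from top to bottom (interval r lies between point r-1 and point r);   *)
(* each interval lies in a region of the diagram.  Every segment (edge of the *)
(* 4-valent graph) meets some level, and every region meets some level.       *)
(* Elementary slices between level l and level l+1:                          *)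
(*  - Cross k ov : points k and k+1 exchange through one crossing; ov = true  *)
(*    iff the strand through point k of level l passes OVER.                  *)
(*  - Cup k b    : a turning arc is born; it meets level l+1 in two new       *)
(*    points k, k+1 with orientations b, ~~ b (points of level l at index    *)
(*    >= k are shifted by 2).                                                 *)
(*  - Cap k      : points k, k+1 of level l (of opposite orientations) are    *)
(*    joined by a turning arc and disappear.                                  *)

Inductive slice := Cross of nat & bool | Cup of nat & bool | Cap of nat.

Definition step (o : seq bool) (s : slice) : option (seq bool) :=
  match s with
  | Cross k _ => if k.+1 < size o then
                   Some (take k o ++ [:: nth false o k.+1; nth false o k] ++ drop k.+2 o)
                 else None
  | Cup k b => if k <= size o then Some (take k o ++ [:: b; ~~ b] ++ drop k o)
               else None
  | Cap k => if (k.+1 < size o) && (nth false o k != nth false o k.+1) then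
               Some (take k o ++ drop k.+2 o)
             else None
  end.

Fixpoint levels (o : seq bool) (ss : seq slice) : option (seq (seq bool)) :=
  match ss with
  | [::] => Some [:: o]
  | s :: ss' => match step o s with
                | Some o' => omap (cons o) (levels o' ss')
                | None => None
                end
  end.

(* A point of the diagram: (level, index).  A region-interval: (level, index). *)
Notation pt := (nat * nat)%type.

(* Region on the left (above, i^up) / right (below, i^down) of the segment   *)
(* through point p of a level, w.r.t. its orientation b.                      *)
Definition up_reg (b : bool) (p : nat) : nat := if b then p else p.+1.
Definition down_reg (b : bool) (p : nat) : nat := if b then p.+1 else p.

(* Crossing data of Cross k ov between level l and l+1, given orientations o  *)
(* of level l: (segment 1, segment 1', segment 2, segment 2', positive?),     *)
(* following the convention: rotate so both strands point right; 1 = upper    *)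
(* left incoming, 2 = lower left incoming, 1' continues 1, 2' continues 2;    *)
(* positive iff strand 1 is over.                                            *)
Definition cross_data (o : seq bool) (l k : nat) (ov : bool)
  : pt * pt * pt * pt * bool :=
  let a := l in let b := l.+1 in
  match nth false o k, nth false o k.+1 with
  | true, true   => ((a, k), (b, k.+1), (a, k.+1), (b, k), ov)
  | false, false => ((b, k.+1), (a, k), (b, k), (a, k.+1), ov)
  | true, false  => ((b, k), (a, k.+1), (a, k), (b, k.+1), ~~ ov)
  | false, true  => ((a, k.+1), (b, k), (b, k.+1), (a, k), ~~ ov)
  end.

Section Colorings.
Variable C : fieldType.

(* A line of C^2 (row vectors) is represented by a nonzero spanning row      *)
(* vector; two representatives give the same line iff (v == w)%MS.           *)

Definition same_seg (g : pt -> 'M[C]_2) (L : pt -> 'rV[C]_2) (x y : pt) : Prop :=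
  g x = g y /\ (L x == L y)%MS.

Definition crossing_rule (g : pt -> 'M[C]_2) (L : pt -> 'rV[C]_2)
  (i1 i1' i2 i2' : pt) (pos : bool) : Prop :=
  if pos then
    [/\ g i1' = g i1, g i2' = invmx (g i1) *m g i2 *m g i1,
        (L i1' == L i1)%MS & (L i2' == L i2 *m g i1)%MS]
  else
    [/\ g i2' = g i2, g i1' = g i2 *m g i1 *m invmx (g i2),
        (L i2' == L i2)%MS & (L i1' == L i1 *m invmx (g i2))%MS].

Definition dec_coloring (ss : seq slice) (ls : seq (seq bool))
  (g : pt -> 'M[C]_2) (L : pt -> 'rV[C]_2) : Prop :=
  (forall l p, l < size ls -> p < size (nth [::] ls l) ->
     [/\ \det (g (l, p)) = 1%R, L (l, p) != 0%R & (L (l, p) *m g (l, p) == L (l, p))%MS])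
  /\
  (forall l, l < size ss ->
     let o := nth [::] ls l in
     match nth (Cap 0) ss l with
     | Cross k ov =>
         (forall p, p < size o -> p != k -> p != k.+1 ->
            same_seg g L (l.+1, p) (l, p)) /\
         (let: (i1, i1', i2, i2', pos) := cross_data o l k ov in
          crossing_rule g L i1 i1' i2 i2' pos)
     | Cup k _ =>
         (forall p, p < k -> same_seg g L (l.+1, p) (l, p)) /\
         (forall p, k <= p < size o -> same_seg g L (l.+1, p.+2) (l, p)) /\
         same_seg g L (l.+1, k) (l.+1, k.+1)
     | Cap k =>
         (forall p, p < k -> same_seg g L (l.+1, p) (l, p)) /\
         (forall p, k.+2 <= p < size o -> same_seg g L (l.+1, p - 2) (l, p)) /\
         same_seg g L (l, k) (l, k.+1)
     end).

Definition shadow_coloring (ss : seq slice) (ls : seq (seq bool))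
  (g : pt -> 'M[C]_2) (u : pt -> 'cV[C]_2) : Prop :=
  (forall l r, l < size ls -> r <= size (nth [::] ls l) -> u (l, r) != 0%R)
  /\
  (forall l p, l < size ls -> p < size (nth [::] ls l) ->
     let b := nth false (nth [::] ls l) p in
     u (l, down_reg b p) = g (l, p) *m u (l, up_reg b p))
  /\
  (forall l, l < size ss ->
     let o := nth [::] ls l in
     match nth (Cap 0) ss l with
     | Cross k _ =>
         forall r, r <= size o -> r != k.+1 -> u (l.+1, r) = u (l, r)
     | Cup k _ =>
         (forall r, r <= k -> u (l.+1, r) = u (l, r)) /\
         (forall r, k <= r <= size o -> u (l.+1, r.+2) = u (l, r))
     | Cap k =>
         (forall r, r <= k -> u (l.+1, r) = u (l, r)) /\
         (forall r, k.+2 <= r <= size o -> u (l.+1, r - 2) = u (l, r))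
     end).

Definition e2 : 'cV[C]_2 := delta_mx 1%R 0%R.

Definition admissible (ls : seq (seq bool))
  (L : pt -> 'rV[C]_2) (u : pt -> 'cV[C]_2) : Prop :=
  (forall l r, l < size ls -> r <= size (nth [::] ls l) ->
     \det (row_mx (u (l, r)) e2) != 0%R)
  /\
  (forall l p, l < size ls -> p < size (nth [::] ls l) ->
     let b := nth false (nth [::] ls l) p in
     forall v : 'rV[C]_2, v != 0%R -> (v <= L (l, p))%MS ->
       v *m e2 != 0%R /\ v *m u (l, up_reg b p) != 0%R).

End Colorings.

From mathcomp Require Import all_boot all_order all_algebra.
From mathcomp Require Import complex reals.
From mathcomp Require Import zify.
Import Order.TTheory GRing.Theory Num.Theory.
Set Implicit Arguments. Unset Strict Implicit. Unset Printing Implicit Defensive.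
Local Open Scope ring_scope.

(* Give the top interval of every level the same vector u0 and push it downwards:
   passing the point p of level l multiplies it by g(l, p), or by its inverse when
   the strand points left ([level_mx]).  Consecutive levels then agree, by the
   Wirtinger relation g_1' g_2' = g_2 g_1 at a crossing and by g g^-1 = 1 at a cup
   or a cap, whose two arcs carry the same matrix.
   Each admissibility condition asks an affine function of one parameter not to
   vanish: v_i u_{i^up} is linear in u0 = (1, t) and unchanged by conjugation,
   while conjugating by the shear h = [[1, s], [0, 1]] makes the first coordinate
   of h^-1 u_j and the second one of v_i h affine in s.  None of these finitely
   many functions is identically zero, and a field of characteristic 0 is
   infinite. *)

Section Levels.
Local Open Scope nat_scope.

Lemma levelsP o ss ls : levels o ss = Some ls ->
  [/\ size ls = (size ss).+1, nth [::] ls 0 = o &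
      forall l, l < size ss ->
        step (nth [::] ls l) (nth (Cap 0) ss l) = Some (nth [::] ls l.+1)].
Proof.
elim: ss o ls => [|s ss IH] o ls /=; first by move=> [<-].
case Es: (step o s) => [o'|] //; case El: (levels o' ss) => [ls'|] //= [<-].
have [szls' ls'0 stepls'] := IH _ _ El; split=> //=; first by rewrite szls'.
by case=> [|l] /=; [rewrite ls'0 | rewrite ltnS; exact: stepls'].
Qed.

Lemma nth_take_cat_lt (T : Type) (x0 : T) (s t : seq T) k p :
  p < k -> k <= size s -> nth x0 (take k s ++ t) p = nth x0 s p.
Proof. by move=> pk ks; rewrite nth_cat size_takel // pk nth_take. Qed.

Lemma nth_take_cat_ge (T : Type) (x0 : T) (s t : seq T) k p :
  k <= p -> k <= size s -> nth x0 (take k s ++ t) p = nth x0 t (p - k).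
Proof. by move=> kp ks; rewrite nth_cat size_takel // ltnNge kp. Qed.

End Levels.

Section Transfer.
Variable C : fieldType.
Local Open Scope nat_scope.

Fixpoint transfer (G : nat -> 'M[C]_2) r : 'M[C]_2 :=
  if r is r'.+1 then G r' *m transfer G r' else 1%:M.

Lemma transfer_unit (G : nat -> 'M[C]_2) r :
  (forall p, p < r -> G p \in unitmx) -> transfer G r \in unitmx.
Proof.
elim: r => [|r IH] GU /=; first exact: unitmx1.
by rewrite unitmx_mul GU // IH // => p /ltnW; exact: GU.
Qed.

Lemma transfer_eq (G G' : nat -> 'M[C]_2) r :
  (forall p, p < r -> G' p = G p) -> transfer G' r = transfer G r.
Proof.
elim: r => [|r IH] eqG //=.
by rewrite eqG // IH // => p /ltnW; exact: eqG.
Qed.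

Lemma transfer_shift (G G' : nat -> 'M[C]_2) a a' n : transfer G' a' = transfer G a ->
  (forall i, i < n -> G' (a' + i) = G (a + i)) ->
  transfer G' (a' + n) = transfer G (a + n).
Proof.
move=> eq_a; elim: n => [|n IH] eqG; first by rewrite !addn0.
by rewrite !addnS /= eqG // IH // => i /ltnW; exact: eqG.
Qed.

Lemma transfer_swap (G G' : nat -> 'M[C]_2) n k : k.+1 < n ->
  (forall p, p < n -> p != k -> p != k.+1 -> G' p = G p) ->
  G' k.+1 *m G' k = G k.+1 *m G k ->
  forall r, r <= n -> r != k.+1 -> transfer G' r = transfer G r.
Proof.
move=> kn eqG eq_k1 r rn rk.
have eq_k : transfer G' k = transfer G k.
  by apply: transfer_eq => p pk; apply: eqG; lia.
have [rk'|kr] := leqP r k.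
  by apply: transfer_eq => p pr; apply: eqG; lia.
have eq_k2 : transfer G' k.+2 = transfer G k.+2 by rewrite /= !mulmxA eq_k1 eq_k.
have -> : r = k.+2 + (r - k.+2) by lia.
by apply: (transfer_shift eq_k2) => i ir; apply: eqG; lia.
Qed.

Lemma transfer_insert (G G' : nat -> 'M[C]_2) n k :
  (forall p, p < k -> G' p = G p) ->
  (forall p, k <= p < n -> G' p.+2 = G p) ->
  G' k.+1 *m G' k = 1%:M ->
  (forall r, r <= k -> transfer G' r = transfer G r) /\
  (forall r, k <= r <= n -> transfer G' r.+2 = transfer G r).
Proof.
move=> eqG eqG2 cancel_k.
have eq_le r : r <= k -> transfer G' r = transfer G r.
  by move=> rk; apply: transfer_eq => p pr; apply: eqG; lia.
split=> // r /andP [kr rn].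
have [d Er] : exists d, r = k + d by exists (r - k); lia.
have eq_k2 : transfer G' k.+2 = transfer G k.
  by rewrite /= mulmxA cancel_k mul1mx eq_le.
rewrite Er -2!addSn; apply: (transfer_shift eq_k2) => i id.
by rewrite !addSn eqG2 //; lia.
Qed.

End Transfer.

Section Oriented.
Variable C : fieldType.
Implicit Types (A B : 'M[C]_2) (b : bool).

Definition oriented b A := if b then A else invmx A.

Lemma oriented_unit b A : A \in unitmx -> oriented b A \in unitmx.
Proof. by case: b; rewrite /= ?unitmx_inv. Qed.

Lemma orientedNK b A : A \in unitmx -> oriented (~~ b) A *m oriented b A = 1%:M.
Proof. by case: b => uA /=; rewrite ?mulVmx ?mulmxV. Qed.

Lemma crossing_rule_wirtinger (g : pt -> 'M[C]_2) L i1 i1' i2 i2' pos :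
  g i1 \in unitmx -> g i2 \in unitmx ->
  crossing_rule g L i1 i1' i2 i2' pos -> g i1' *m g i2' = g i2 *m g i1.
Proof.
move=> u1 u2; rewrite /crossing_rule; case: pos => -[-> -> _ _].
  by rewrite !mulmxA mulmxV // mul1mx.
by rewrite mulmxKV.
Qed.

Lemma cross_data_oriented (o : seq bool) l k ov (g : pt -> 'M[C]_2) L :
  let a := nth false o k in let b := nth false o k.+1 in
  let A := g (l, k) in let B := g (l, k.+1) in
  let A' := g (l.+1, k) in let B' := g (l.+1, k.+1) in
  A \in unitmx -> B \in unitmx -> A' \in unitmx -> B' \in unitmx ->
  (let: (i1, i1', i2, i2', pos) := cross_data o l k ov in
   crossing_rule g L i1 i1' i2 i2' pos) ->
  oriented a B' *m oriented b A' = oriented b B *m oriented a A.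
Proof.
move=> a b A B A' B' uA uB uA' uB'; rewrite /cross_data -/a -/b.
case: a; case: b => /crossing_rule_wirtinger W /=.
- exact: W.
- have {}W : B *m B' = A *m A' by exact: W.
  by apply: (can_inj (mulKmx uB)); rewrite mulmxA W mulmxK // mulKVmx.
- have {}W : A' *m A = B' *m B by exact: W.
  by apply: (can_inj (mulKmx uB')); rewrite mulKVmx // mulmxA -W mulmxK.
- have {}W : A *m B = A' *m B' by exact: W.
  have uAB : A *m B \in unitmx by rewrite unitmx_mul uA uB.
  apply: (can_inj (mulKmx uAB)).
  by rewrite {1}W !mulmxA !mulmxK // !mulmxV.
Qed.

End Oriented.

Definition level_mx (C : fieldType) (g : pt -> 'M[C]_2) (o : seq bool) l p :=
  oriented (nth false o p) (g (l, p)).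

Section ColoringTransfer.
Variables (C : fieldType) (o0 : seq bool) (ss : seq slice) (ls : seq (seq bool)).
Variables (g : pt -> 'M[C]_2) (L : pt -> 'rV[C]_2).
Hypotheses (Hls : levels o0 ss = Some ls) (Hcol : dec_coloring ss ls g L).
Local Notation lv l := (nth [::] ls l).
Local Notation G l := (level_mx g (lv l) l).
Local Open Scope nat_scope.

Lemma coloring_unit l p : l < size ls -> p < size (lv l) -> g (l, p) \in unitmx.
Proof. by move=> lL pL; have [d _ _] := Hcol.1 l p lL pL; rewrite unitmxE d unitr1. Qed.

Lemma level_mx_unit l p : l < size ls -> p < size (lv l) -> G l p \in unitmx.
Proof. by move=> lL pL; rewrite oriented_unit ?coloring_unit. Qed.

Lemma transfer_level_unit l r :
  l < size ls -> r <= size (lv l) -> transfer (G l) r \in unitmx.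
Proof. by move=> lL rL; apply: transfer_unit => p pr; apply: level_mx_unit; lia. Qed.

Lemma coloring_line_neq0 l p : l < size ls -> p < size (lv l) -> L (l, p) != 0%R.
Proof. by move=> lL pL; have [] := Hcol.1 l p lL pL. Qed.

Lemma coloring_transfer_neq0 l p : l < size ls -> p < size (lv l) ->
  L (l, p) *m transfer (G l) (up_reg (nth false (lv l) p) p) != 0%R.
Proof.
move=> lL pL; have TU : transfer (G l) (up_reg (nth false (lv l) p) p) \in unitmx.
  by apply: transfer_level_unit lL _; rewrite /up_reg; case: ifP; lia.
apply: contra (coloring_line_neq0 lL pL) => /eqP LT0.
by rewrite -(mulmxK TU (L (l, p))) LT0 mul0mx.
Qed.

Lemma transfer_cross l k ov : l < size ss -> nth (Cap 0) ss l = Cross k ov ->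
  forall r, r <= size (lv l) -> r != k.+1 -> transfer (G l.+1) r = transfer (G l) r.
Proof.
move=> lS Es; have [szls _ stepl] := levelsP Hls.
have := stepl l lS; rewrite Es /step; case: ifP => // kn [o'E].
have := Hcol.2 l lS; rewrite Es => -[same cr].
have lL : l < size ls by rewrite szls ltnW.
have l1L : l.+1 < size ls by rewrite szls.
have szo' : size (lv l.+1) = size (lv l).
  by rewrite -o'E !size_cat /= size_drop size_takel; lia.
have nth_o' p : p != k -> p != k.+1 -> nth false (lv l.+1) p = nth false (lv l) p.
  move=> pk pk1; rewrite -o'E; have [ltpk|lekp] := ltnP p k.
    by rewrite nth_take_cat_lt //; lia.
  rewrite nth_take_cat_ge; try lia.
  have -> : p - k = (p - k.+2).+2 by lia.
  by rewrite /= nth_drop; congr nth; lia.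
have nth_o'k : nth false (lv l.+1) k = nth false (lv l) k.+1.
  by rewrite -o'E nth_take_cat_ge ?subnn //; lia.
have nth_o'k1 : nth false (lv l.+1) k.+1 = nth false (lv l) k.
  by rewrite -o'E nth_take_cat_ge ?subSnn //; lia.
apply: (transfer_swap kn) => [p pn pk pk1|].
  by rewrite /level_mx nth_o' //; have [-> _] := same p pn pk pk1.
rewrite /level_mx nth_o'k nth_o'k1.
apply: cross_data_oriented cr; apply: coloring_unit; lia.
Qed.

Lemma transfer_cup l k b : l < size ss -> nth (Cap 0) ss l = Cup k b ->
  (forall r, r <= k -> transfer (G l.+1) r = transfer (G l) r) /\
  (forall r, k <= r <= size (lv l) -> transfer (G l.+1) r.+2 = transfer (G l) r).
Proof.
move=> lS Es; have [szls _ stepl] := levelsP Hls.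
have := stepl l lS; rewrite Es /step; case: ifP => // kn [o'E].
have := Hcol.2 l lS; rewrite Es => -[same_lt [same_ge same_k]].
have l1L : l.+1 < size ls by rewrite szls.
have szo' : size (lv l.+1) = (size (lv l)).+2.
  by rewrite -o'E !size_cat /= size_drop size_takel; lia.
have nth_lt p : p < k -> nth false (lv l.+1) p = nth false (lv l) p.
  by move=> pk; rewrite -o'E nth_take_cat_lt.
have nth_ge p : k <= p -> nth false (lv l.+1) p.+2 = nth false (lv l) p.
  move=> kp; rewrite -o'E nth_take_cat_ge ?subSn //; try lia.
  by rewrite /= nth_drop subnKC.
have nth_k : nth false (lv l.+1) k = b by rewrite -o'E nth_take_cat_ge ?subnn.
have nth_k1 : nth false (lv l.+1) k.+1 = ~~ b.
  by rewrite -o'E nth_take_cat_ge ?subSnn.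
apply: (transfer_insert (n := size (lv l))) => [p pk|p kpn|].
- by rewrite /level_mx nth_lt //; have [-> _] := same_lt p pk.
- by rewrite /level_mx nth_ge ?(andP kpn).1 //; have [-> _] := same_ge p kpn.
rewrite /level_mx nth_k nth_k1 (proj1 same_k) orientedNK //.
by apply: coloring_unit; rewrite ?szo'; lia.
Qed.

Lemma transfer_cap l k : l < size ss -> nth (Cap 0) ss l = Cap k ->
  (forall r, r <= k -> transfer (G l.+1) r = transfer (G l) r) /\
  (forall r, k.+2 <= r <= size (lv l) -> transfer (G l.+1) (r - 2) = transfer (G l) r).
Proof.
move=> lS Es; have [szls _ stepl] := levelsP Hls.
have := stepl l lS; rewrite Es /step; case: ifP => // /andP [kn nth_kk1] [o'E].
have := Hcol.2 l lS; rewrite Es => -[same_lt [same_ge same_k]].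
have lL : l < size ls by rewrite szls ltnW.
have szo' : size (lv l.+1) = size (lv l) - 2.
  by rewrite -o'E size_cat size_drop size_takel; lia.
have nth_lt p : p < k -> nth false (lv l) p = nth false (lv l.+1) p.
  by move=> pk; rewrite -o'E nth_take_cat_lt //; lia.
have nth_ge p : k <= p -> nth false (lv l) p.+2 = nth false (lv l.+1) p.
  move=> kp; rewrite -o'E nth_take_cat_ge; try lia.
  by rewrite nth_drop; congr nth; lia.
have nth_k1 : nth false (lv l) k.+1 = ~~ nth false (lv l) k.
  by move: nth_kk1; case: (nth false _ k); case: (nth false _ k.+1).
(* A cap is a cup read backwards. *)
have [eq_le eq_ge] :
    (forall r, r <= k -> transfer (G l) r = transfer (G l.+1) r) /\
    (forall r, k <= r <= size (lv l.+1) -> transfer (G l) r.+2 = transfer (G l.+1) r).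
  apply: transfer_insert => [p pk|p /andP [kp pn]|].
  - by rewrite /level_mx nth_lt //; have [-> _] := same_lt p pk.
  - rewrite /level_mx nth_ge //.
    have /same_ge [<- _] : k.+2 <= p.+2 < size (lv l) by rewrite szo' in pn; lia.
    by rewrite subn2.
  rewrite /level_mx nth_k1 -(proj1 same_k) orientedNK //.
  by apply: coloring_unit; lia.
split=> [r rk|[|[|r]] // /andP [kr rn]]; first by rewrite eq_le.
by rewrite subn2 eq_ge // szo'; lia.
Qed.

Lemma transfer_shadow_coloring (u0 : 'cV[C]_2) : u0 != 0%R ->
  shadow_coloring ss ls g (fun x => transfer (G x.1) x.2 *m u0).
Proof.
move=> u0_neq0; split; [|split].
- move=> l r lL rL /=; apply: contra u0_neq0 => /eqP Tu0.
  by rewrite -(mulKmx (transfer_level_unit lL rL) u0) Tu0 mulmx0.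
- move=> l p lL pL /=; rewrite /up_reg /down_reg.
  case E: (nth false (lv l) p) => /=; rewrite /level_mx E /= !mulmxA //.
  by rewrite mulmxV ?mul1mx ?coloring_unit.
move=> l lS /=; case Es: (nth (Cap 0) ss l) => [k ov|k b|k].
- by move=> r rn rk; congr (_ *m u0); exact: transfer_cross Es r rn rk.
- have [eq_le eq_ge] := transfer_cup lS Es.
  by split=> r rk; congr (_ *m u0); [exact: eq_le | exact: eq_ge].
- have [eq_le eq_ge] := transfer_cap lS Es.
  by split=> r rk; congr (_ *m u0); [exact: eq_le | exact: eq_ge].
Qed.

End ColoringTransfer.

Lemma shadow_coloring_conj (C : fieldType) ss ls (g : pt -> 'M[C]_2) u h :
  h \in unitmx -> shadow_coloring ss ls g u ->
  shadow_coloring ss ls (fun x => invmx h *m g x *m h) (fun x => invmx h *m u x).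
Proof.
move=> hU [u_neq0 [u_step u_slice]]; split; [|split].
- move=> l r lL rL; apply: contra (u_neq0 l r lL rL) => /eqP hu.
  by rewrite -(mulKVmx hU (u (l, r))) hu mulmx0.
- by move=> l p lL pL /=; rewrite u_step // !mulmxA mulmxK.
move=> l lS; have := u_slice l lS; case: (nth (Cap 0) ss l) => [k ov|k b|k] /=.
- by move=> eq_u r rn rk; rewrite eq_u.
- by move=> [eq_le eq_ge]; split=> r rk; [rewrite eq_le | rewrite eq_ge].
- by move=> [eq_le eq_ge]; split=> r rk; [rewrite eq_le | rewrite eq_ge].
Qed.

Section TwoByTwo.
Variable C : fieldType.

Lemma mulmx2E m n (A : 'M[C]_(m, 2)) (B : 'M[C]_(2, n)) i j :
  (A *m B) i j = A i 0 * B 0 j + A i 1 * B 1 j.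
Proof.
rewrite !mxE !big_ord_recl big_ord0 addr0.
by have -> : lift ord0 (ord0 : 'I_1) = 1 :> 'I_2 by apply/val_inj.
Qed.

Lemma det_mx22 (A : 'M[C]_2) : \det A = A 0 0 * A 1 1 - A 0 1 * A 1 0.
Proof.
rewrite (expand_det_col _ 0) !big_ord_recl big_ord0 /cofactor !det_mx11 !mxE /=.
have lift01 : lift ord0 (ord0 : 'I_1) = 1 :> 'I_2 by apply/val_inj.
have lift10 : lift 1 (ord0 : 'I_1) = 0 :> 'I_2 by apply/val_inj.
by rewrite addr0 expr0 expr1 !mul1r mulN1r mulrN !lift01 lift10 [A 1 0 * _]mulrC.
Qed.

Lemma det_row_mx_e2 (x : 'cV[C]_2) : \det (row_mx x (e2 C)) = x 0 0.
Proof.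
have split0 : split (0 : 'I_(1 + 1)) = inl 0.
  by rewrite -(unsplitK (inl 0 : 'I_1 + 'I_1)); congr split; apply/val_inj.
have split1 : split (1 : 'I_(1 + 1)) = inr 0.
  by rewrite -(unsplitK (inr 0 : 'I_1 + 'I_1)); congr split; apply/val_inj.
by rewrite det_mx22 !mxE split0 split1 !mxE /= mulr1 mul0r subr0.
Qed.

Lemma ord2P (j : 'I_2) : j = 0 \/ j = 1.
Proof. by case: j => [[|[|//]]] ?; [left | right]; apply/val_inj. Qed.

Lemma rV2_eq0 (w : 'rV[C]_2) : (w == 0) = (w 0 0 == 0) && (w 0 1 == 0).
Proof.
apply/eqP/andP => [->|[/eqP w0 /eqP w1]]; first by rewrite !mxE.
by apply/matrixP => i j; rewrite (ord1 i) !mxE; case: (ord2P j) => ->.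
Qed.

Lemma cV2_eq0 (u : 'cV[C]_2) : (u == 0) = (u 0 0 == 0) && (u 1 0 == 0).
Proof. by rewrite -trmx_eq0 rV2_eq0 !mxE. Qed.

Definition shear (s : C) : 'M[C]_2 := 1%:M + s *: delta_mx 0 1.

Lemma shearE s i j : shear s i j = (i == j)%:R + s * ((i == 0) && (j == 1))%:R.
Proof. by rewrite !mxE. Qed.

Lemma shearD s t : shear s *m shear t = shear (s + t).
Proof.
rewrite /shear mulmxDl !mulmxDr !mul1mx mulmx1 -!scalemxAl -scalemxAr.
by rewrite mul_delta_mx_0 // !scaler0 addr0 scalerDl addrA addrAC.
Qed.

Lemma shear0 : shear 0 = 1%:M.
Proof. by rewrite /shear scale0r addr0. Qed.

Lemma shear_unit s : shear s \in unitmx.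
Proof.
by case: (@mulmx1_unit _ _ (shear s) (shear (- s))); rewrite ?shearD ?subrr ?shear0.
Qed.

Lemma invmx_shear s : invmx (shear s) = shear (- s).
Proof. by rewrite -[RHS](mulKmx (shear_unit s)) shearD addrN shear0 mulmx1. Qed.

Lemma det_shear s : \det (shear s) = 1.
Proof. by rewrite det_mx22 !shearE /= !(mulr0, mulr1, addr0, add0r, subr0). Qed.

Lemma admissible_conj ls (L : pt -> 'rV[C]_2) (u : pt -> 'cV[C]_2) h :
  h \in unitmx ->
  (forall l r, (l < size ls)%N -> (r <= size (nth [::] ls l))%N ->
     (invmx h *m u (l, r)) 0 0 != 0) ->
  (forall l p, (l < size ls)%N -> (p < size (nth [::] ls l))%N ->
     (L (l, p) *m h) 0 1 != 0) ->
  (forall l p, (l < size ls)%N -> (p < size (nth [::] ls l))%N ->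
     L (l, p) *m u (l, up_reg (nth false (nth [::] ls l) p) p) != 0) ->
  admissible ls (fun x => L x *m h) (fun x => invmx h *m u x).
Proof.
move=> hU hu_neq0 Lh_neq0 Lu_neq0; split=> [l r lL rL|l p lL pL /= v v_neq0].
  by rewrite det_row_mx_e2 hu_neq0.
move=> /sub_rVP [a v_def]; have a_neq0 : a != 0.
  by apply: contraNneq v_neq0 => a0; rewrite v_def a0 scale0r.
rewrite v_def -!scalemxAl !scalemx_eq0 !negb_or !a_neq0 /=; split.
  apply: contraNneq (Lh_neq0 _ _ lL pL) => /matrixP/(_ 0 0).
  by rewrite /e2 -colE mxE => ->; rewrite mxE.
by rewrite -mulmxA mulKVmx // Lu_neq0.
Qed.

End TwoByTwo.

Section Avoidance.
Variable C : numFieldType.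

Lemma exists_notin (s : seq C) : exists t, t \notin s.
Proof.
pose s1 := [seq (n%:R : C) | n <- iota 0 (size s).+1].
have s1_uniq : uniq s1.
  by rewrite map_inj_uniq ?iota_uniq // => m n /eqP; rewrite eqr_nat => /eqP.
have /hasP [t _ t_notin] : has (fun t => t \notin s) s1.
  apply/hasPn => s1_sub.
  have := uniq_leq_size s1_uniq (fun t ts1 => negbNE (s1_sub t ts1)).
  by rewrite size_map size_iota ltnn.
by exists t.
Qed.

Lemma exists_nonroot_linear (I : eqType) (s : seq I) (a b : I -> C) :
  {in s, forall i, (a i != 0) || (b i != 0)} ->
  exists t, {in s, forall i, a i + b i * t != 0}.
Proof.
move=> ab_neq0; have [t t_notin] := exists_notin [seq - a i / b i | i <- s].
exists t => i i_s; have := ab_neq0 i i_s.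
have [->|b_neq0] := eqVneq (b i) 0; first by rewrite mul0r addr0 orbF.
move=> _; apply: contra t_notin; rewrite addr_eq0 => /eqP abt.
by apply/mapP; exists i => //; rewrite abt opprK mulrC mulKf.
Qed.

Lemma exists_cV2_avoid (I : eqType) (s : seq I) (w : I -> 'rV[C]_2) :
  {in s, forall i, w i != 0} ->
  exists2 u0 : 'cV[C]_2, u0 != 0 & {in s, forall i, w i *m u0 != 0}.
Proof.
move=> w_neq0.
have [|t Ht] :=
  exists_nonroot_linear (s := s) (a := fun i => w i 0 0) (b := fun i => w i 0 1).
  by move=> i /w_neq0; rewrite rV2_eq0 negb_and.
exists (delta_mx 0 0 + t *: delta_mx 1 0).
  by rewrite cV2_eq0 !mxE /= mulr0 addr0 oner_eq0.
move=> i i_s; apply: contraNneq (Ht i i_s).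
rewrite mulmxDr -scalemxAr -!colE => /matrixP/(_ 0 0).
by rewrite !mxE /= [t * _]mulrC => ->.
Qed.

Lemma exists_shear_avoid (I J : eqType) (su : seq I) (u : I -> 'cV[C]_2)
    (sw : seq J) (w : J -> 'rV[C]_2) :
  {in su, forall i, u i != 0} -> {in sw, forall j, w j != 0} ->
  exists s, {in su, forall i, (invmx (shear s) *m u i) 0 0 != 0} /\
            {in sw, forall j, (w j *m shear s) 0 1 != 0}.
Proof.
move=> u_neq0 w_neq0.
pose ps := [seq (u i 0 0, - u i 1 0) | i <- su] ++ [seq (w j 0 1, w j 0 0) | j <- sw].
have [|s Hs] := exists_nonroot_linear (s := ps) (a := fst) (b := snd).
  move=> x; rewrite mem_cat => /orP [] /mapP [i i_in ->] /=.
    by rewrite oppr_eq0 -negb_and -cV2_eq0 u_neq0.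
  by rewrite orbC -negb_and -rV2_eq0 w_neq0.
exists s; split=> [i i_su | j j_sw].
  have := Hs (u i 0 0, - u i 1 0); rewrite mem_cat map_f //= => /(_ isT).
  rewrite invmx_shear mulmx2E !shearE /= mulr0 addr0 mul1r add0r mulr1.
  by rewrite !mulNr [s * _]mulrC.
have := Hs (w j 0 1, w j 0 0); rewrite mem_cat map_f ?orbT //= => /(_ isT).
by rewrite mulmx2E !shearE /= mulr0 addr0 add0r !mulr1 addrC.
Qed.

End Avoidance.

Definition grid (m : nat) (n : nat -> nat) : seq pt :=
  [seq (l, p) | l <- iota 0 m, p <- iota 0 (n l)].

Lemma mem_grid m n l p : ((l, p) \in grid m n) = (l < m)%N && (p < n l)%N.
Proof.
apply/allpairsPdep/andP => [[l' [p' [+ + [-> ->]]]]|[lm pn]].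
  by rewrite !mem_iota.
by exists l, p; rewrite !mem_iota.
Qed.

Local Open Scope complex_scope.

Theorem theoremB (R : realType) (o0 : seq bool) (ss : seq slice)
  (ls : seq (seq bool)) (g : pt -> 'M[R[i]]_2) (L : pt -> 'rV[R[i]]_2) :
  levels o0 ss = Some ls ->
  dec_coloring ss ls g L ->
  exists h : 'M[R[i]]_2, \det h = 1 /\
    exists u : pt -> 'cV[R[i]]_2,
      shadow_coloring ss ls (fun x => invmx h *m g x *m h) u /\
      admissible ls (fun x => L x *m h) u.
Proof.
move=> Hls Hcol.
pose points := grid (size ls) (fun l => size (nth [::] ls l)).
pose regions := grid (size ls) (fun l => (size (nth [::] ls l)).+1).
pose T (x : pt) := transfer (level_mx g (nth [::] ls x.1) x.1) x.2.
pose up (x : pt) := (x.1, up_reg (nth false (nth [::] ls x.1) x.2) x.2).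
have [|u0 u0_neq0 LTu0_neq0] :=
  exists_cV2_avoid (s := points) (w := fun x => L x *m T (up x)).
  case=> l p; rewrite mem_grid => /andP [lL pL].
  exact: (coloring_transfer_neq0 Hcol).
have u_shadow := transfer_shadow_coloring Hls Hcol u0_neq0.
have [||s [hu_neq0 Lh_neq0]] :=
  exists_shear_avoid (su := regions) (u := fun x => T x *m u0) (sw := points) (w := L).
- by case=> l r; rewrite mem_grid ltnS => /andP [lL rL]; exact: u_shadow.1.
- by case=> l p; rewrite mem_grid => /andP [lL pL]; exact: (coloring_line_neq0 Hcol).
exists (shear s); split; first exact: det_shear.
exists (fun x => invmx (shear s) *m (T x *m u0)); split.
  exact: shadow_coloring_conj (shear_unit s) u_shadow.
apply: admissible_conj (shear_unit s) _ _ _ => l p lL pL.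
- by apply: hu_neq0; rewrite mem_grid ltnS lL pL.
- by apply: Lh_neq0; rewrite mem_grid lL pL.
- by rewrite mulmxA; apply: LTu0_neq0; rewrite mem_grid lL pL.
Qed.
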